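(* Let $\mathcal{V}$ be a non-trivial quantale, $\mathsf{F}\colon\mathbf{Set}\to\mathbf{Set}$ a functor and $\widehat{\mathsf{F}}$ a lifting of $\mathsf{F}$ to $\mathbf{Cat}(\mathcal{V})$. Then $\widehat{\mathsf{F}}$ is induced by a lax extension of $\mathsf{F}$ to $\mathbf{Rel}(\mathcal{V})$ if and only if $\widehat{\mathsf{F}}$ preserves initial morphisms and is locally monotone.
   Context: A quantale $(\mathcal{V},\otimes,k)$ is a complete lattice with commutative monoid structure, each $u\otimes-$ preserving joins, $\hom(u,-)$ its right adjoint; non-trivial: $\bot\ne\top$. $\mathcal{V}$-categories $(X,a)$: $k\le a(x,x)$, $a(x,y)\otimes a(y,z)\le a(x,z)$; $\mathcal{V}$-functors $f\colon(X,a)\to(Y,b)$: $a(x,y)\le b(f x,f y)$; initial if equality holds. A lifting of $\mathsf{F}$ is a functor $\widehat{\mathsf{F}}$ on $\mathbf{Cat}(\mathcal{V})$ with $|\widehat{\mathsf{F}}-|=\mathsf{F}|-|$. For $\mathcal{V}$-functors $f,g\colon(X,a)\to(Y,b)$, $f\le g$ iff $k\le b(f(x),g(x))$ for all $x$; a functor is locally monotone if it preserves this order on hom-sets. $\mathcal{V}$-relations $r\colon X\nrightarrow Y$ are maps $X\times Y\to\mathcal{V}$, composed by $(s\cdot r)(x,z)=\bigvee_y r(x,y)\otimes s(y,z)$, converse $r^\circ(y,x)=r(x,y)$, functions viewed as relations with value $k$ on the graph and $\bot$ elsewhere. A lax extension of $\mathsf{F}$ assigns to each $r\colon X\nrightarrow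 Y$ a $\widehat{\mathsf{F}}r\colon\mathsf{F}X\nrightarrow\mathsf{F}Y$ such that (L1) $r\le r'\Rightarrow\widehat{\mathsf{F}}r\le\widehat{\mathsf{F}}r'$, (L2) $\widehat{\mathsf{F}}s\cdot\widehat{\mathsf{F}}r\le\widehat{\mathsf{F}}(s\cdot r)$, (L3) $\mathsf{F}f\le\widehat{\mathsf{F}}f$ and $(\mathsf{F}f)^\circ\le\widehat{\mathsf{F}}(f^\circ)$ for functions $f$. The lifting induced by a lax extension sends $(X,a)$ to $(\mathsf{F}X,\widehat{\mathsf{F}}a)$ and acts as $\mathsf{F}$ on maps. *)

Set Implicit Arguments.
Unset Strict Implicit.

Record quantale := Quantale {
  qcar :> Type;
  qle : qcar -> qcar -> Prop;
  qsup : (qcar -> Prop) -> qcar;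
  qtens : qcar -> qcar -> qcar;
  qk : qcar;
  qle_refl : forall u, qle u u;
  qle_trans : forall u v w, qle u v -> qle v w -> qle u w;
  qle_antisym : forall u v, qle u v -> qle v u -> u = v;
  qsup_ub : forall (S : qcar -> Prop) u, S u -> qle u (qsup S);
  qsup_least : forall (S : qcar -> Prop) w, (forall u, S u -> qle u w) -> qle (qsup S) w;
  qtens_assoc : forall u v w, qtens u (qtens v w) = qtens (qtens u v) w;
  qtens_comm : forall u v, qtens u v = qtens v u;
  qtens_unit : forall u, qtens qk u = u;
  qtens_sup : forall u (S : qcar -> Prop),
      qtens u (qsup S) = qsup (fun v => exists s, S s /\ v = qtens u s)
}.

Arguments qle {q}.
Arguments qsup {q}.
Arguments qtens {q}.
Arguments qk {q}.

Definition qbot (V : quantale) : V := qsup (fun _ : V => False).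
Definition qtop (V : quantale) : V := qsup (fun _ : V => True).
Definition nontrivial (V : quantale) : Prop := qbot V <> qtop V.

Record SetFunctor := MkSetFunctor {
  Fobj :> Type -> Type;
  Fmap : forall X Y : Type, (X -> Y) -> Fobj X -> Fobj Y;
  Fmap_id : forall (X : Type) (u : Fobj X), Fmap (fun x : X => x) u = u;
  Fmap_comp : forall (X Y Z : Type) (f : X -> Y) (g : Y -> Z) (u : Fobj X),
      Fmap (fun x => g (f x)) u = Fmap g (Fmap f u)
}.

Section Vstuff.
Variable V : quantale.

Definition Vrel (X Y : Type) := X -> Y -> V.

Definition rle X Y (r r' : Vrel X Y) : Prop := forall x y, qle (r x y) (r' x y).

Definition rcomp X Y Z (s : Vrel Y Z) (r : Vrel X Y) : Vrel X Z :=
  fun x z => qsup (fun v => exists y, v = qtens (r x y) (s y z)).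

Definition rconv X Y (r : Vrel X Y) : Vrel Y X := fun y x => r x y.

(** a function as a V-relation: value k on the graph, bottom elsewhere
    (written as the join of {k | f x = y}) *)
Definition graph X Y (f : X -> Y) : Vrel X Y :=
  fun x y => qsup (fun v => f x = y /\ v = qk).

Definition Vcat X (a : Vrel X X) : Prop :=
  (forall x, qle qk (a x x)) /\
  (forall x y z, qle (qtens (a x y) (a y z)) (a x z)).

Definition Vfun X Y (a : Vrel X X) (b : Vrel Y Y) (f : X -> Y) : Prop :=
  forall x y, qle (a x y) (b (f x) (f y)).

Definition initial X Y (a : Vrel X X) (b : Vrel Y Y) (f : X -> Y) : Prop :=
  forall x y, a x y = b (f x) (f y).

Definition fle X Y (b : Vrel Y Y) (f g : X -> Y) : Prop :=
  forall x, qle qk (b (f x) (g x)).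

End Vstuff.

(** A lifting of F to Cat(V): since it has underlying set F X and acts as F on
    maps, it is given by a structure map [L] sending a V-category structure on X
    to one on F X, such that F f is a V-functor whenever f is. *)
Definition lifting_map (V : quantale) (F : SetFunctor) :=
  forall X : Type, Vrel V X X -> Vrel V (F X) (F X).

Definition is_lifting (V : quantale) (F : SetFunctor) (L : lifting_map V F) : Prop :=
  (forall X (a : Vrel V X X), Vcat a -> Vcat (L X a)) /\
  (forall X Y (a : Vrel V X X) (b : Vrel V Y Y) (f : X -> Y),
      Vcat a -> Vcat b -> Vfun a b f -> Vfun (L X a) (L Y b) (@Fmap F _ _ f)).

Definition rel_ext_map (V : quantale) (F : SetFunctor) :=
  forall X Y : Type, Vrel V X Y -> Vrel V (F X) (F Y).

Definition lax_extension (V : quantale) (F : SetFunctor) (E : rel_ext_map V F) : Prop :=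
  (forall X Y (r r' : Vrel V X Y), rle r r' -> rle (E X Y r) (E X Y r')) /\
  (forall X Y Z (r : Vrel V X Y) (s : Vrel V Y Z),
      rle (rcomp (E Y Z s) (E X Y r)) (E X Z (rcomp s r))) /\
  (forall X Y (f : X -> Y),
      rle (graph V (@Fmap F _ _ f)) (E X Y (graph V f)) /\
      rle (rconv (graph V (@Fmap F _ _ f))) (E Y X (rconv (graph V f)))).

Definition induced_by (V : quantale) (F : SetFunctor) (L : lifting_map V F)
    (E : rel_ext_map V F) : Prop :=
  forall X (a : Vrel V X X), Vcat a -> forall u v, L X a u v = E X X a u v.

Definition preserves_initial (V : quantale) (F : SetFunctor) (L : lifting_map V F) : Prop :=
  forall X Y (a : Vrel V X X) (b : Vrel V Y Y) (f : X -> Y),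
    Vcat a -> Vcat b -> initial a b f -> initial (L X a) (L Y b) (@Fmap F _ _ f).

Definition locally_monotone (V : quantale) (F : SetFunctor) (L : lifting_map V F) : Prop :=
  forall X Y (a : Vrel V X X) (b : Vrel V Y Y) (f g : X -> Y),
    Vcat a -> Vcat b -> Vfun a b f -> Vfun a b g -> fle b f g ->
    fle (L Y b) (@Fmap F _ _ f) (@Fmap F _ _ g).

(* A lax extension E is monotone along functions in both directions because it contains
   F f and its converse: from k <= E f° (F f u, u) and k <= E g (v, F g v), lax functoriality
   gives E r (u, v) <= E (g · r · f°) (F f u, F g v), and dually.  This yields preservation of
   initial maps and, taking for r the identity relation, local monotonicity.

   Conversely, a V-relation r : X -|-> Y is encoded by its collage, the V-category on X + Y
   that is discrete on the summands and r between them, and E r (u, v) is the lifted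
   structure at (F inl u, F inr v).  Since initial maps are preserved, E r, E s and E (s · r)
   can all be read off one three-part collage on X + (Y + Z), where lax functoriality becomes
   transitivity of the lifted structure.  Local monotonicity applied to inl <= inr ∘ f gives
   the unit axioms. *)

Set Implicit Arguments.
Unset Strict Implicit.

Section Quantale.
Variable V : quantale.

Lemma bot_le (w : V) : qle (qbot V) w.
Proof. apply qsup_least. intros v []. Qed.

Lemma tens_bot_r (u : V) : qtens u (qbot V) = qbot V.
Proof.
  unfold qbot. rewrite qtens_sup. apply qle_antisym.
  - apply qsup_least. intros v [s [[] _]].
  - apply bot_le.
Qed.

Lemma tens_bot_le (u w : V) : qle (qtens u (qbot V)) w.
Proof. rewrite tens_bot_r. apply bot_le. Qed.

Lemma bot_tens_le (u w : V) : qle (qtens (qbot V) u) w.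
Proof. rewrite qtens_comm. apply tens_bot_le. Qed.

Lemma tens_unit_r (u : V) : qtens u qk = u.
Proof. rewrite qtens_comm. apply qtens_unit. Qed.

Lemma tens_mono_r (u v v' : V) : qle v v' -> qle (qtens u v) (qtens u v').
Proof.
  intro Hv.
  assert (Hsup : qsup (fun t : V => t = v \/ t = v') = v').
  { apply qle_antisym.
    - apply qsup_least. intros t [-> | ->]; [exact Hv | apply qle_refl].
    - apply qsup_ub. right; reflexivity. }
  rewrite <- Hsup, qtens_sup. apply qsup_ub.
  exists v. split; [left |]; reflexivity.
Qed.

Lemma tens_mono (u u' v v' : V) :
  qle u u' -> qle v v' -> qle (qtens u v) (qtens u' v').
Proof.
  intros Hu Hv. apply qle_trans with (qtens u v'); [now apply tens_mono_r |].
  rewrite (qtens_comm u), (qtens_comm u'). now apply tens_mono_r.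
Qed.

Lemma tens_sup_le (S : V -> Prop) (t w : V) :
  (forall s, S s -> qle (qtens t s) w) -> qle (qtens t (qsup S)) w.
Proof. intro H. rewrite qtens_sup. apply qsup_least. intros x [s [Hs ->]]. auto. Qed.

Lemma sup_tens_le (S : V -> Prop) (t w : V) :
  (forall s, S s -> qle (qtens s t) w) -> qle (qtens (qsup S) t) w.
Proof.
  intro H. rewrite qtens_comm. apply tens_sup_le. intros s Hs. rewrite qtens_comm. auto.
Qed.

Lemma le_sandwich (t a b : V) : qle qk a -> qle qk b -> qle t (qtens a (qtens t b)).
Proof.
  intros Ha Hb. apply qle_trans with (qtens qk (qtens t qk)).
  { rewrite qtens_unit, tens_unit_r. apply qle_refl. }
  apply tens_mono; [exact Ha |]. apply tens_mono; [apply qle_refl | exact Hb].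
Qed.

(* [graph V f x y] unfolds to [ind (f x = y)], so the lemmas below apply to graphs. *)
Definition ind (P : Prop) : V := qsup (fun v => P /\ v = qk).

Lemma ind_le (P : Prop) (w : V) : (P -> qle qk w) -> qle (ind P) w.
Proof. intro H. apply qsup_least. intros v [HP ->]. auto. Qed.

Lemma k_le_ind (P : Prop) : P -> qle qk (ind P).
Proof. intro HP. apply qsup_ub. split; auto. Qed.

Lemma ind_tens_le (P : Prop) (t w : V) : (P -> qle t w) -> qle (qtens (ind P) t) w.
Proof. intro H. apply sup_tens_le. intros s [HP ->]. rewrite qtens_unit. auto. Qed.

Lemma tens_ind_le (P : Prop) (t w : V) : (P -> qle t w) -> qle (qtens t (ind P)) w.
Proof. intro H. rewrite qtens_comm. now apply ind_tens_le. Qed.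

Lemma le_rcomp X Y Z (r : Vrel V X Y) (s : Vrel V Y Z) x y z :
  qle (qtens (r x y) (s y z)) (rcomp s r x z).
Proof. apply qsup_ub. now exists y. Qed.

Lemma rcomp_le X Y Z (r : Vrel V X Y) (s : Vrel V Y Z) x z (w : V) :
  (forall y, qle (qtens (r x y) (s y z)) w) -> qle (rcomp s r x z) w.
Proof. intro H. apply qsup_least. intros v [y ->]. auto. Qed.

Lemma rcomp_graph_conv_le X Y X' Y' (r : Vrel V X Y) (s : Vrel V X' Y')
    (f : X -> X') (g : Y -> Y') :
  (forall x y, qle (r x y) (s (f x) (g y))) ->
  rle (rcomp (rcomp (graph V g) r) (rconv (graph V f))) s.
Proof.
  intros H x' y'. apply rcomp_le. intro x. apply ind_tens_le. intros <-.
  apply rcomp_le. intro y. apply tens_ind_le. intros <-. apply H.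
Qed.

Lemma rcomp_conv_graph_le X Y X' Y' (r : Vrel V X Y) (s : Vrel V X' Y')
    (f : X -> X') (g : Y -> Y') :
  (forall x y, qle (s (f x) (g y)) (r x y)) ->
  rle (rcomp (rcomp (rconv (graph V g)) s) (graph V f)) r.
Proof.
  intros H x y. apply rcomp_le. intro x'. apply ind_tens_le. intros <-.
  apply rcomp_le. intro y'. apply tens_ind_le. intros <-. apply H.
Qed.

End Quantale.

Section Collage.
Variable V : quantale.

Definition disc (X : Type) : Vrel V X X := graph V (fun x => x).
Arguments disc X : clear implicits.

Definition collage X Y (p : Vrel V X X) (q : Vrel V Y Y) (r : Vrel V X Y) :
    Vrel V (X + Y) (X + Y) :=
  fun s t => match s, t with
  | inl x, inl x' => p x x'
  | inr y, inr y' => q y y'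
  | inl x, inr y => r x y
  | inr _, inl _ => qbot V
  end.

Definition collage3 X Y Z (q : Vrel V Y Y) (r : Vrel V X Y) (s : Vrel V Y Z)
    (t : Vrel V X Z) : Vrel V (X + (Y + Z)) (X + (Y + Z)) :=
  collage (disc X) (collage q (disc Z) s)
    (fun x p => match p with inl y => r x y | inr z => t x z end).

Lemma Vcat_disc X : Vcat (disc X).
Proof.
  split.
  - intro x. now apply k_le_ind.
  - intros x y z. apply ind_tens_le. intros ->. apply qle_refl.
Qed.

Lemma Vfun_disc X Y (b : Vrel V Y Y) (f : X -> Y) :
  (forall y, qle qk (b y y)) -> Vfun (disc X) b f.
Proof. intros Hb x x'. apply ind_le. intros ->. apply Hb. Qed.

Lemma Vcat_collage X Y (p : Vrel V X X) (q : Vrel V Y Y) (r : Vrel V X Y) :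
  Vcat p -> Vcat q ->
  (forall x x' y, qle (qtens (p x x') (r x' y)) (r x y)) ->
  (forall x y y', qle (qtens (r x y) (q y y')) (r x y')) ->
  Vcat (collage p q r).
Proof.
  intros [p_refl p_trans] [q_refl q_trans] Hpr Hrq. split.
  - intros [x | y]; simpl; auto.
  - intros [x | y] [x' | y'] [x'' | y'']; simpl; auto using tens_bot_le, bot_tens_le.
Qed.

Lemma Vcat_collage_disc X Y (r : Vrel V X Y) : Vcat (collage (disc X) (disc Y) r).
Proof.
  apply Vcat_collage; try apply Vcat_disc; intros.
  - apply ind_tens_le. intros ->. apply qle_refl.
  - apply tens_ind_le. intros ->. apply qle_refl.
Qed.

Lemma Vcat_collage3 X Y Z (q : Vrel V Y Y) (r : Vrel V X Y) (s : Vrel V Y Z)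
    (t : Vrel V X Z) :
  Vcat q ->
  (forall x y y', qle (qtens (r x y) (q y y')) (r x y')) ->
  (forall y y' z, qle (qtens (q y y') (s y' z)) (s y z)) ->
  (forall x y z, qle (qtens (r x y) (s y z)) (t x z)) ->
  Vcat (collage3 q r s t).
Proof.
  intros Hq Hrq Hqs Hrs. apply Vcat_collage.
  - apply Vcat_disc.
  - apply Vcat_collage; auto using Vcat_disc.
    intros. apply tens_ind_le. intros ->. apply qle_refl.
  - intros x x' [y | z]; apply ind_tens_le; intros ->; apply qle_refl.
  - intros x [y | z] [y' | z']; simpl; auto using tens_bot_le.
    apply tens_ind_le. intros ->. apply qle_refl.
Qed.

End Collage.
Arguments disc V X : clear implicits.

Section LaxExtension.
Variables (V : quantale) (F : SetFunctor) (E : rel_ext_map V F).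
Hypothesis HE : lax_extension E.

Lemma lax_ext_mono X Y (r r' : Vrel V X Y) u v :
  rle r r' -> qle (E r u v) (E r' u v).
Proof. intro H. now apply (proj1 HE). Qed.

Lemma lax_ext_tens_le X Y Z (r : Vrel V X Y) (s : Vrel V Y Z) u v w :
  qle (qtens (E r u v) (E s v w)) (E (rcomp s r) u w).
Proof. eapply qle_trans; [apply le_rcomp | apply (proj1 (proj2 HE))]. Qed.

Lemma k_le_lax_ext_graph X Y (f : X -> Y) u :
  qle qk (E (graph V f) u (Fmap f u)).
Proof.
  apply qle_trans with (graph V (Fmap f) u (Fmap f u)).
  - now apply k_le_ind.
  - apply (proj2 (proj2 HE) X Y f).
Qed.

Lemma k_le_lax_ext_conv X Y (f : X -> Y) u :
  qle qk (E (rconv (graph V f)) (Fmap f u) u).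
Proof.
  apply qle_trans with (rconv (graph V (Fmap f)) (Fmap f u) u).
  - now apply k_le_ind.
  - apply (proj2 (proj2 HE) X Y f).
Qed.

Lemma lax_ext_push X Y X' Y' (r : Vrel V X Y) (s : Vrel V X' Y')
    (f : X -> X') (g : Y -> Y') u v :
  (forall x y, qle (r x y) (s (f x) (g y))) ->
  qle (E r u v) (E s (Fmap f u) (Fmap g v)).
Proof.
  intro H.
  eapply qle_trans; [apply (le_sandwich _ (k_le_lax_ext_conv f u) (k_le_lax_ext_graph g v)) |].
  eapply qle_trans; [apply tens_mono; [apply qle_refl | apply lax_ext_tens_le] |].
  eapply qle_trans; [apply lax_ext_tens_le |].
  apply lax_ext_mono. now apply rcomp_graph_conv_le.
Qed.

Lemma lax_ext_pull X Y X' Y' (r : Vrel V X Y) (s : Vrel V X' Y')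
    (f : X -> X') (g : Y -> Y') u v :
  (forall x y, qle (s (f x) (g y)) (r x y)) ->
  qle (E s (Fmap f u) (Fmap g v)) (E r u v).
Proof.
  intro H.
  eapply qle_trans; [apply (le_sandwich _ (k_le_lax_ext_graph f u) (k_le_lax_ext_conv g v)) |].
  eapply qle_trans; [apply tens_mono; [apply qle_refl | apply lax_ext_tens_le] |].
  eapply qle_trans; [apply lax_ext_tens_le |].
  apply lax_ext_mono. now apply rcomp_conv_graph_le.
Qed.

Variable L : lifting_map V F.
Hypothesis HLE : induced_by L E.

Lemma induced_preserves_initial : preserves_initial L.
Proof.
  intros X Y a b f Ha Hb Hf u v. rewrite (HLE Ha), (HLE Hb).
  apply qle_antisym; [apply lax_ext_push | apply lax_ext_pull];
    intros x y; rewrite Hf; apply qle_refl.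
Qed.

Lemma induced_locally_monotone : locally_monotone L.
Proof.
  intros X Y a b f g _ Hb _ _ Hfg u. rewrite (HLE Hb).
  eapply qle_trans; [apply (k_le_lax_ext_graph (fun x => x) u) |].
  rewrite Fmap_id. apply lax_ext_push.
  intros x y. apply ind_le. intros <-. apply Hfg.
Qed.

End LaxExtension.

Section LiftingExtension.
Variables (V : quantale) (F : SetFunctor) (L : lifting_map V F).
Hypothesis HL : is_lifting L.

Definition ext_of_lifting : rel_ext_map V F := fun X Y r u v =>
  L (collage (disc V X) (disc V Y) r) (Fmap inl u) (Fmap inr v).

Lemma lifting_trans X (c : Vrel V X X) u v w :
  Vcat c -> qle (qtens (L c u v) (L c v w)) (L c u w).
Proof. intro Hc. apply (proj1 HL X c Hc). Qed.

Lemma lifting_mono X (a b : Vrel V X X) :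
  Vcat a -> Vcat b -> rle a b -> rle (L a) (L b).
Proof.
  intros Ha Hb Hab u v.
  pose proof (proj2 HL X X a b (fun x => x) Ha Hb Hab u v) as K.
  now rewrite !Fmap_id in K.
Qed.

Lemma ext_of_lifting_mono X Y (r r' : Vrel V X Y) :
  rle r r' -> rle (ext_of_lifting r) (ext_of_lifting r').
Proof.
  intros H u v. apply lifting_mono; try apply Vcat_collage_disc.
  intros [x | y] [x' | y']; simpl; auto using qle_refl.
Qed.

Hypothesis HPI : preserves_initial L.

Lemma ext_of_lifting_initial X Y W (r : Vrel V X Y) (c : Vrel V W W) (h : X + Y -> W) u v :
  Vcat c -> initial (collage (disc V X) (disc V Y) r) c h ->
  ext_of_lifting r u v = L c (Fmap (fun x => h (inl x)) u) (Fmap (fun y => h (inr y)) v).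
Proof.
  intros Hc Hh. unfold ext_of_lifting.
  rewrite (HPI (Vcat_collage_disc r) Hc Hh), <- !Fmap_comp. reflexivity.
Qed.

Lemma ext_of_lifting_comp X Y Z (r : Vrel V X Y) (s : Vrel V Y Z) :
  rle (rcomp (ext_of_lifting s) (ext_of_lifting r)) (ext_of_lifting (rcomp s r)).
Proof.
  intros u w. apply rcomp_le. intro v.
  set (G := collage3 (disc V Y) r s (rcomp s r)).
  assert (HG : Vcat G).
  { apply Vcat_collage3; auto using Vcat_disc; intros.
    - apply tens_ind_le. intros ->. apply qle_refl.
    - apply ind_tens_le. intros ->. apply qle_refl.
    - apply le_rcomp. }
  rewrite (@ext_of_lifting_initial _ _ _ r G
             (fun p => match p with inl x => inl x | inr y => inr (inl y) end) u v HG),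
          (@ext_of_lifting_initial _ _ _ s G inr v w HG),
          (@ext_of_lifting_initial _ _ _ (rcomp s r) G
             (fun p => match p with inl x => inl x | inr z => inr (inr z) end) u w HG).
  - apply lifting_trans, HG.
  - intros [x | z] [x' | z']; reflexivity.
  - intros [y | z] [y' | z']; reflexivity.
  - intros [x | y] [x' | y']; reflexivity.
Qed.

Hypothesis HLM : locally_monotone L.

Lemma k_le_lifting Z W (c : Vrel V W W) (f g : Z -> W) w :
  Vcat c -> (forall z, qle qk (c (f z) (g z))) -> qle qk (L c (Fmap f w) (Fmap g w)).
Proof.
  intros Hc Hfg. pose proof (proj1 Hc) as Hc_refl.
  apply (HLM (Vcat_disc V Z) Hc); auto using Vfun_disc.
Qed.

Lemma ext_of_lifting_graph X Y (f : X -> Y) :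
  rle (graph V (Fmap f)) (ext_of_lifting (graph V f)).
Proof.
  intros u w. apply ind_le. intros <-. unfold ext_of_lifting.
  rewrite <- Fmap_comp.
  apply k_le_lifting; [apply Vcat_collage_disc |]. intro x. now apply k_le_ind.
Qed.

Lemma ext_of_lifting_conv X Y (f : X -> Y) :
  rle (rconv (graph V (Fmap f))) (ext_of_lifting (rconv (graph V f))).
Proof.
  intros w u. apply ind_le. intros <-. unfold ext_of_lifting.
  rewrite <- Fmap_comp.
  apply k_le_lifting; [apply Vcat_collage_disc |]. intro x. now apply k_le_ind.
Qed.

Lemma ext_of_lifting_lax : lax_extension ext_of_lifting.
Proof.
  repeat split.
  - apply ext_of_lifting_mono.
  - apply ext_of_lifting_comp.
  - apply ext_of_lifting_graph.
  - apply ext_of_lifting_conv.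
Qed.

Lemma ext_of_lifting_le X (a : Vrel V X X) u v :
  Vcat a -> qle (ext_of_lifting a u v) (L a u v).
Proof.
  intros Ha. unfold ext_of_lifting.
  set (codiag := fun p : X + X => match p with inl x => x | inr x => x end).
  assert (Hcodiag : Vfun (collage (disc V X) (disc V X) a) a codiag).
  { intros [x | x] [x' | x']; simpl; auto using bot_le, qle_refl.
    all: apply ind_le; intros <-; apply Ha. }
  pose proof (proj2 HL _ _ _ _ codiag (Vcat_collage_disc a) Ha Hcodiag
                (Fmap inl u) (Fmap inr v)) as K.
  now rewrite <- !Fmap_comp, !Fmap_id in K.
Qed.

(* [L a] is transported into the three-part collage on [X + (X + X)], where [a] sits in
   the middle; the discrete outer copies lie below and above the middle one. *)
Lemma le_ext_of_lifting X (a : Vrel V X X) u v :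
  Vcat a -> qle (L a u v) (ext_of_lifting a u v).
Proof.
  intros [a_refl a_trans].
  set (G := collage3 a a a a).
  assert (HG : Vcat G) by (apply Vcat_collage3; auto; split; auto).
  set (mid := fun x : X => @inr X (X + X) (inl x)).
  rewrite (HPI (f := mid) (conj a_refl a_trans) HG (fun x y => eq_refl)),
          (@ext_of_lifting_initial _ _ _ a G
             (fun p => match p with inl x => inl x | inr x => inr (inr x) end) u v HG).
  2: intros [x | x] [x' | x']; reflexivity.
  eapply qle_trans; [| apply lifting_trans with (v := Fmap mid v), HG].
  eapply qle_trans; [| apply tens_mono; [apply lifting_trans with (v := Fmap mid u), HG
                                         | apply qle_refl]].
  rewrite <- qtens_assoc. apply le_sandwich; apply k_le_lifting; auto.
Qed.

Lemma lifting_induces_ext : induced_by L ext_of_lifting.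
Proof.
  intros X a Ha u v. apply qle_antisym.
  - now apply le_ext_of_lifting.
  - now apply ext_of_lifting_le.
Qed.

End LiftingExtension.

Theorem theorem7 (V : quantale) (F : SetFunctor) (L : lifting_map V F) :
  nontrivial V -> is_lifting L ->
  ((exists E : rel_ext_map V F, lax_extension E /\ induced_by L E) <->
   (preserves_initial L /\ locally_monotone L)).
Proof.
  intros _ HL. split.
  - intros [E [HE HLE]]. split.
    + exact (induced_preserves_initial HE HLE).
    + exact (induced_locally_monotone HE HLE).
  - intros [HPI HLM]. exists (ext_of_lifting L). split.
    + exact (ext_of_lifting_lax HL HPI HLM).
    + exact (lifting_induces_ext HL HPI HLM).
Qed.
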